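(* Let $D$ be a digraph and $k\ge 0$ an integer. If $\operatorname{dbw}(D)\le k$, then $\operatorname{bcrk}(\vec{L}(D))\le 2(k+1)$.
   Context: All digraphs are finite and loopless; $\vec{xy}$ denotes a directed edge from $x$ to $y$. A layout of a symmetric function $f:2^U\to\mathbb{Z}$ on a finite set $U$ is a pair $(T,\beta)$ with $T$ a tree of maximum degree at most three and $\beta$ a bijection from the leaves of $T$ to $U$; each edge of $T$ splits the leaves into two sides, with $Y$ the leaves on one side, and its order is $f(\beta(Y))$; the width of the layout is the maximum order of its edges (0 if none), and the layout-$f$-width of $U$ is the minimum width of a layout. Directed branch-width: for $X\subseteq E(D)$, $S^V_X=\{y: \exists x,z,\ \vec{xy}\in E(D)\setminus X,\ \vec{yz}\in X\}$ and $f_D(X)=|S^V_X\cup S^V_{E(D)\setminus X}|$; $\operatorname{dbw}(D)$ is the layout-$f_D$-width of $E(D)$. Directed line graph: $\vec{L}(D)$ has vertex set $E(D)$ and an edge $\vec{ef}$ whenever $e=\vec{wx}$, $f=\vec{xy}$ for some vertices $w,x,y$. Bi-cut-rank-width: with $M$ the $\mathrm{GF}(2)$ adjacency matrix of a digraph $H$ ($M_{uv}=1$ iff $\vec{uv}\in E(H)$), $g(X)=\operatorname{rk}(M[V(H)\setminus X,X])+\operatorname{rk}(M[X,V(H)\setminus X])$, and $\operatorname{bcrk}(H)$ is the layout-$g$-width of $V(H)$. *)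

From HB Require Import structures.
From mathcomp Require Import all_boot all_order all_algebra.
Set Implicit Arguments. Unset Strict Implicit. Unset Printing Implicit Defensive.
Import GRing.Theory.

Definition del_edge (N : finType) (adj : rel N) (v w : N) : rel N :=
  fun a b => adj a b && ~~ (((a == v) && (b == w)) || ((a == w) && (b == v))).

(* A (finite) tree: a symmetric, irreflexive, connected relation in which
   every edge is a bridge (i.e. acyclic).  The empty graph is allowed
   (only relevant when the ground set U is empty). *)
Definition is_tree (N : finType) (adj : rel N) : Prop :=
  [/\ symmetric adj, irreflexive adj,
      (forall x y, connect adj x y) &
      (forall v w, adj v w -> ~~ connect (del_edge adj v w) w v)].

Definition degree (N : finType) (adj : rel N) (v : N) : nat :=
  #|[set w | adj v w]|.

(* leaves: nodes of degree at most one (degree 0 only for a one-node tree) *)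
Definition leaves (N : finType) (adj : rel N) : {set N} :=
  [set v | degree adj v <= 1].

Definition side (N : finType) (adj : rel N) (v w : N) : {set N} :=
  [set x | connect (del_edge adj v w) w x].

(* A layout (T, beta) of f on U with T = (N, adj): T is a tree of maximum
   degree at most three, beta restricted to the leaves is a bijection onto U.
   "layout-f-width of U is at most k" <-> some layout has width <= k, i.e.
   every tree edge has order <= k (width 0 if there is no edge). *)
Definition layout_width_le (U : finType) (f : {set U} -> nat) (k : nat) : Prop :=
  exists (N : finType) (adj : rel N) (beta : N -> U),
    [/\ is_tree adj,
        (forall v, degree adj v <= 3),
        {in leaves adj &, injective beta},
        (forall u, exists2 v, v \in leaves adj & beta v = u) &
        (forall v w, adj v w ->
           f [set beta x | x in leaves adj :&: side adj v w] <= k)].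

(* A digraph on a finite vertex type V is a loopless relation E (simple). *)

Definition dedge (V : finType) (E : rel V) := {p : V * V | E p.1 p.2}.

Definition SV (V : finType) (E : rel V) (X : {set dedge E}) : {set V} :=
  [set y | [exists e : dedge E, exists f : dedge E,
     [&& e \notin X, f \in X, (val e).2 == y & (val f).1 == y]]].

Definition fD (V : finType) (E : rel V) (X : {set dedge E}) : nat :=
  #|SV X :|: SV (~: X)|.

Definition dbw_le (V : finType) (E : rel V) (k : nat) : Prop :=
  layout_width_le (@fD V E) k.

(* Directed line graph: vertex set E(D), edge e -> f iff head e = tail f. *)
Definition line_rel (V : finType) (E : rel V) : rel (dedge E) :=
  fun e f => (val e).2 == (val f).1.

Definition cutrk (H : finType) (adj : rel H) (A B : {set H}) : nat :=
  \rank (\matrix_(i < #|A|, j < #|B|)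
           ((adj (enum_val i) (enum_val j))%:R : 'F_2))%R.

Definition gH (H : finType) (adj : rel H) (X : {set H}) : nat :=
  cutrk adj (~: X) X + cutrk adj X (~: X).

Definition bcrk_le (H : finType) (adj : rel H) (k : nat) : Prop :=
  layout_width_le (gH adj) k.

From mathcomp Require Import all_boot all_order all_algebra.
Import GRing.Theory.

Set Implicit Arguments.
Unset Strict Implicit.
Unset Printing Implicit Defensive.

(* A layout of f_D on E(D) is also a layout of the bi-cut-rank
   function g of the line graph L(D) on the same ground set, so it suffices to
   compare the two connectivity functions edge set by edge set: we show
   g(X) <= 2 f_D(X) <= 2 (k + 1) whenever f_D(X) <= k.

   The key observation is that adjacency in L(D) factors through vertices of D:
   e -> f iff head(e) = tail(f).  Hence for edge sets X, Y the matrix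
   M[X, Y] is the product of the X x S incidence matrix "head(e) = s" with the
   S x Y incidence matrix "s = tail(f)", for any vertex set S containing the
   heads of all X-edges that have an out-neighbour in Y.  So its rank is at
   most |S| (lemma [cutrk_factor]).  For (Y, X) = (E \ X, X) the set S^V_X is
   such a set, and for (X, E \ X) the set S^V_(E \ X) is; both lie inside the
   set counted by f_D(X), giving [gH_line_le].  The argument in fact yields
   width 2k and does not use that D is loopless. *)

Local Open Scope ring_scope.

Lemma sum_incidence (V : finType) (S : {set V}) (a b : V) :
  a \in S ->
  \sum_(s < #|S|) ((a == enum_val s) : nat)%:R * ((enum_val s == b) : nat)%:R
    = ((a == b) : nat)%:R :> 'F_2.
Proof.
move=> aS; rewrite (bigD1 (enum_rank_in aS a)) //= enum_rankK_in // eqxx mul1r.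
rewrite big1 ?addr0 // => s ne_s; case: eqP => [a_s|]; last by rewrite mul0r.
by move: ne_s; rewrite -[s](enum_valK_in aS) -a_s eqxx.
Qed.

Lemma cutrk_factor (H V : finType) (adj : rel H) (hd tl : H -> V)
    (X Y : {set H}) (S : {set V}) :
  (forall x y, adj x y = (hd x == tl y)) ->
  (forall x y, x \in X -> y \in Y -> adj x y -> hd x \in S) ->
  (cutrk adj X Y <= #|S|)%N.
Proof.
move=> adjE arcS; rewrite /cutrk.
set A := \matrix_(i < #|X|, s < #|S|)
  (((hd (enum_val i) == enum_val s) : nat)%:R : 'F_2).
set B := \matrix_(s < #|S|, j < #|Y|)
  (((enum_val s == tl (enum_val j)) : nat)%:R : 'F_2).
have -> : \matrix_(i < #|X|, j < #|Y|)
    ((adj (enum_val i) (enum_val j))%:R : 'F_2) = A *m B.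
  apply/matrixP => i j; rewrite !mxE adjE.
  under eq_bigr => s _ do rewrite !mxE.
  have [hdS | hdNS] := boolP (hd (enum_val i) \in S).
    by rewrite sum_incidence.
  have -> : (hd (enum_val i) == tl (enum_val j)) = false.
    apply/negbTE/negP => arc; move/negP: hdNS; apply.
    by apply: (arcS _ _ (enum_valP i) (enum_valP j)); rewrite adjE.
  rewrite big1 // => s _; case: eqP => [hd_s|]; last by rewrite mul0r.
  by move: hdNS; rewrite hd_s enum_valP.
exact: leq_trans (mxrankM_maxr _ _) (rank_leq_row _).
Qed.

Local Close Scope ring_scope.

Definition dhead {V : finType} {E : rel V} (e : dedge E) : V := (val e).2.
Definition dtail {V : finType} {E : rel V} (e : dedge E) : V := (val e).1.

Lemma line_relE (V : finType) (E : rel V) (e f : dedge E) :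
  line_rel e f = (dhead e == dtail f).
Proof. by []. Qed.

Lemma head_in_SV (V : finType) (E : rel V) (X : {set dedge E}) (e f : dedge E) :
  e \notin X -> f \in X -> line_rel e f -> dhead e \in SV X.
Proof.
move=> eNX fX /eqP ef; rewrite inE; apply/existsP; exists e; apply/existsP.
by exists f; rewrite eNX fX eqxx -ef eqxx.
Qed.

Lemma gH_line_le (V : finType) (E : rel V) (X : {set dedge E}) :
  (gH (@line_rel V E) X <= 2 * fD X)%N.
Proof.
rewrite /gH /fD mul2n -addnn; apply: leq_add.
  apply: (leq_trans _ (subset_leq_card (subsetUl _ _))).
  apply: (cutrk_factor (@line_relE V E)) => e f; rewrite in_setC.
  exact: head_in_SV.
apply: (leq_trans _ (subset_leq_card (subsetUr _ _))).
apply: (cutrk_factor (@line_relE V E)) => e f eX fNX.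
by apply: head_in_SV; rewrite // in_setC negbK.
Qed.

Theorem mainTheorem2 (V : finType) (E : rel V) (k : nat) :
  irreflexive E -> dbw_le E k -> bcrk_le (@line_rel V E) (2 * (k + 1)).
Proof.
move=> _ [N [adj [beta [tree deg3 inj onto width]]]].
exists N, adj, beta; split => // v w vw.
apply: leq_trans (gH_line_le _) _.
by rewrite leq_mul2l /= addn1 leqW // width.
Qed.
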